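(* Let $A\in\mathbb{R}^{m\times n}$ have singular value decomposition $A=U\Sigma V^\top$ (with $U\in\mathbb{R}^{m\times m}$, $V\in\mathbb{R}^{n\times n}$ orthogonal), let $r=\operatorname{rank}(A)$, and let $\lambda:=(\sigma_1^2(A),\ldots,\sigma_r^2(A),0,\ldots,0)^\top\in\mathbb{R}^m$. Let $1\le s\le r$, let $\mathcal{S}\sim\operatorname{Vol}_s(AA^\top)$, and let $$H_s:=\frac{U\operatorname{diag}\big(e_{s-1}(\lambda_{-1}),\ldots,e_{s-1}(\lambda_{-m})\big)U^\top}{e_s(\lambda)}.$$ Then $$\mathbb{E}\big[I_{\mathcal{S}}^\top (A_{\mathcal{S}}^\dagger)^\top A_{\mathcal{S}}^\dagger I_{\mathcal{S}}\big]\preceq H_s.$$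
   Context: $\sigma_1(A)\ge\cdots\ge\sigma_r(A)>0$ are the nonzero singular values of $A$. For $\xi\in\mathbb{R}^p$ and $1\le \ell\le p$, $e_\ell(\xi):=\sum_{1\le i_1<\cdots<i_\ell\le p}\xi_{i_1}\cdots\xi_{i_\ell}$, and $e_0(\xi):=1$. For $i\in[m]$, $\lambda_{-i}\in\mathbb{R}^{m-1}$ is $\lambda$ with its $i$-th entry removed. For $\mathcal{S}\subseteq[m]$, $A_{\mathcal{S}}$ is the row submatrix of $A$ indexed by $\mathcal{S}$, $I_{\mathcal{S}}$ is the row submatrix of the $m\times m$ identity indexed by $\mathcal{S}$, and $\dagger$ denotes the Moore–Penrose pseudoinverse. $M\preceq N$ means $N-M$ is positive semidefinite. Volume sampling: $\mathcal{S}\sim\operatorname{Vol}_s(AA^\top)$ means $\mathcal{S}$ takes values in the $s$-element subsets of $[m]$ with $\mathbb{P}(\mathcal{S}=\mathcal{T})=\det(A_{\mathcal{T}}A_{\mathcal{T}}^\top)/\sum_{|\mathcal{J}|=s}\det(A_{\mathcal{J}}A_{\mathcal{J}}^\top)$. *)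

From HB Require Import structures.
From mathcomp Require Import all_boot all_order all_algebra.
From mathcomp Require Import boolp classical_sets reals.
Set Implicit Arguments. Unset Strict Implicit. Unset Printing Implicit Defensive.
Import Order.TTheory GRing.Theory Num.Theory.
Local Open Scope ring_scope.

Definition penrose (R : realType) (p q : nat) (A : 'M[R]_(p, q)) (X : 'M[R]_(q, p)) : Prop :=
  [/\ A *m X *m A = A, X *m A *m X = X, (A *m X)^T = A *m X & (X *m A)^T = X *m A].

(* The Moore-Penrose pseudoinverse A^dagger: the (unique, always existing)
   matrix satisfying the Penrose conditions. *)
Definition pinv (R : realType) (p q : nat) (A : 'M[R]_(p, q)) : 'M[R]_(q, p) :=
  xget 0 [set X | penrose A X].

(* Row submatrix A_S of A indexed by S (rows in increasing order). *)
Definition rowsubset (R : realType) (m n : nat) (A : 'M[R]_(m, n)) (S : {set 'I_m})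
  : 'M[R]_(#|S|, n) := \matrix_(i < #|S|, j < n) A (enum_val i) j.

Definition idsub (R : realType) (m : nat) (S : {set 'I_m}) : 'M[R]_(#|S|, m) :=
  rowsubset (1%:M : 'M[R]_m) S.

Definition elem_sym (R : realType) (p l : nat) (xi : 'I_p -> R) : R :=
  \sum_(S : {set 'I_p} | #|S| == l) \prod_(i in S) xi i.

Definition remove_entry (R : realType) (m : nat) (lam : 'I_m -> R) (i : 'I_m)
  : 'I_m.-1 -> R := fun j => lam (lift i j).

Definition volP (R : realType) (m n : nat) (A : 'M[R]_(m, n)) (s : nat) (T : {set 'I_m}) : R :=
  \det (rowsubset A T *m (rowsubset A T)^T) /
  \sum_(J : {set 'I_m} | #|J| == s) \det (rowsubset A J *m (rowsubset A J)^T).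

Definition vol_expect (R : realType) (m n : nat) (A : 'M[R]_(m, n)) (s : nat)
  (f : {set 'I_m} -> 'M[R]_m) : 'M[R]_m :=
  \sum_(T : {set 'I_m} | #|T| == s) volP A s T *: f T.

Definition psd (R : realType) (m : nat) (M : 'M[R]_m) : Prop :=
  M^T = M /\ forall x : 'cV[R]_m, 0 <= (x^T *m M *m x) 0 0.

Definition loewner_le (R : realType) (m : nat) (M N : 'M[R]_m) : Prop := psd (N - M).

(* Write B = A A^T = U diag(lam) U^T and let E_s(M) be the sum of the principal
   s-minors of M, so that the normalising constant of volume sampling is
   E_s(B) = e_s(lam).  For a test vector x and an s-set T, the matrix determinant
   lemma gives det(B_T) x_T^T B_T^-1 x_T = det(B_T + x_T x_T^T) - det(B_T) when
   B_T is invertible, and when det(B_T) = 0 the right-hand side is a Gram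
   determinant, hence nonnegative.  Summing over T bounds e_s(lam) times the
   quadratic form of the expectation by E_s(B + x x^T) - E_s(B).  Since E_s(M) is
   a coefficient of det(M + X), it is invariant under orthogonal conjugation, so
   this difference equals E_s(D + y y^T) - E_s(D) with D = diag(lam), y = U^T x,
   which expands to sum_i e_(s-1)(lam_(-i)) y_i^2 = e_s(lam) x^T H_s x. *)

From HB Require Import structures.
From mathcomp Require Import all_boot all_order all_algebra.
From mathcomp Require Import boolp classical_sets reals.
From mathcomp Require Import perm.
Import Order.TTheory GRing.Theory Num.Theory.
Local Open Scope ring_scope.

Set Implicit Arguments.
Unset Strict Implicit.
Unset Printing Implicit Defensive.

Lemma card_set_ord_le n (S : {set 'I_n}) : (#|S| <= n)%N.
Proof. by have := max_card (mem S); rewrite card_ord. Qed.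

Section PrincipalMinors.
Variable R : comNzRingType.

Lemma sylvester_det p q (A : 'M[R]_(p, q)) (B : 'M[R]_(q, p)) :
  \det (1%:M + A *m B) = \det (1%:M + B *m A).
Proof.
have eL : block_mx 1%:M (-A) B 1%:M =
          block_mx 1%:M 0 B 1%:M *m block_mx 1%:M (-A) 0 (1%:M + B *m A).
  rewrite mulmx_block ?mul1mx ?mul0mx ?mulmx0 ?mulmx1 ?addr0 ?add0r.
  by rewrite mulmxN addrCA addNr addr0.
have eU : block_mx 1%:M (-A) B 1%:M =
          block_mx (1%:M + A *m B) (-A) 0 1%:M *m block_mx 1%:M 0 B 1%:M.
  rewrite mulmx_block ?mul1mx ?mul0mx ?mulmx0 ?mulmx1 ?addr0 ?add0r.
  by rewrite mulNmx addrK.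
have := congr1 determinant eL; rewrite eU !det_mulmx !det_lblock !det_ublock.
by rewrite !det1 !mul1r !mulr1.
Qed.

Definition selmx n (S : {set 'I_n}) : 'M[R]_(#|S|, n) := rowsub enum_val 1%:M.

Definition pminor n (S : {set 'I_n}) (M : 'M[R]_n) : R :=
  \det (selmx S *m M *m (selmx S)^T).

Definition minor_sum n s (M : 'M[R]_n) : R :=
  \sum_(S : {set 'I_n} | #|S| == s) pminor S M.

Definition rowmask n (S : {set 'I_n}) (M : 'M[R]_n) : 'M[R]_n :=
  \matrix_(i, j) if i \in S then M i j else (i == j)%:R.

Lemma selmx_mul_tr n (S : {set 'I_n}) : selmx S *m (selmx S)^T = 1%:M.
Proof.
rewrite /selmx trmx_mxsub trmx1 -mxsub_mul mul1mx.
by apply/matrixP => i j; rewrite !mxE (inj_eq enum_val_inj).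
Qed.

Lemma tr_selmx_mul n (S : {set 'I_n}) :
  (selmx S)^T *m selmx S = diag_mx (\row_i (i \in S)%:R).
Proof.
apply/matrixP => i j; rewrite !mxE.
under eq_bigr do rewrite !mxE.
rewrite -(big_enum_val (fun k : 'I_n => (k == i)%:R * (k == j)%:R)) /=.
rewrite big_mkcond (bigD1 i) //= eqxx mul1r big1 ?addr0 => [|k /negbTE ->].
  by case: (i \in S); rewrite ?mul1r ?mul0r ?mul0rn // eq_sym.
by rewrite mul0r if_same.
Qed.

Lemma rowmaskE n (S : {set 'I_n}) (M : 'M[R]_n) :
  rowmask S M = 1%:M + (selmx S)^T *m (selmx S *m (M - 1%:M)).
Proof.
rewrite mulmxA tr_selmx_mul mul_diag_mx.
apply/matrixP => i j; rewrite !mxE.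
by case: (i \in S); rewrite ?mul1r ?mul0r ?addr0 // addrC subrK.
Qed.

Lemma det_rowmask n (S : {set 'I_n}) (M : 'M[R]_n) :
  \det (rowmask S M) = pminor S M.
Proof.
rewrite rowmaskE sylvester_det mulmxBr mulmx1 mulmxBl selmx_mul_tr.
by rewrite addrC subrK.
Qed.

Lemma det_add_diag n (M : 'M[R]_n) (d : 'rV[R]_n) :
  \det (M + diag_mx d) = \sum_(S : {set 'I_n}) (\prod_(i in ~: S) d 0 i) * pminor S M.
Proof.
have entryE (s : 'S_n) : \prod_i (M + diag_mx d) i (s i) =
    \prod_i (M i (s i) + d 0 i * (i == s i)%:R).
  by apply: eq_bigr => i _; rewrite !mxE mulr_natr.
rewrite /determinant.
under eq_bigr => s _ do rewrite entryE bigA_distr mulr_sumr.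
rewrite exchange_big /=; apply: eq_bigr => S _.
rewrite -det_rowmask /determinant mulr_sumr; apply: eq_bigr => s _.
rewrite mulrCA; congr (_ * _).
rewrite (eq_bigr (fun i => (if i \in S then 1 else d 0 i) * rowmask S M i (s i))).
  rewrite big_split /= [in RHS]big_mkcond; congr (_ * _).
  by apply: eq_bigr => i _; rewrite finset.in_setC; case: (i \in S).
by move=> i _; rewrite mxE; case: (i \in S); rewrite ?mul1r.
Qed.

Lemma prod_neq_lift n (i : 'I_n) (F : 'I_n -> R) :
  \prod_(j | j != i) F j = \prod_(k < n.-1) F (lift i k).
Proof.
rewrite (reindex_omap (lift i) (unlift i)) /=; last first.
  by move=> j ji; case: unliftP ji => [k ->|->]; rewrite ?eqxx.
by apply: eq_bigl => k; rewrite liftK eqxx andbT eq_sym neq_lift.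
Qed.

Lemma adj_diag n (d : 'rV[R]_n) :
  \adj (diag_mx d) = diag_mx (\row_i \prod_(j | j != i) d 0 j).
Proof.
apply/matrixP => i j; rewrite !mxE /cofactor.
have [<-|ij] := eqVneq i j.
  rewrite -signr_odd addnn odd_double expr0 mul1r mulr1n prod_neq_lift.
  have -> : row' i (col' i (diag_mx d)) = diag_mx (\row_k d 0 (lift i k)).
    by apply/matrixP => a b; rewrite !mxE (inj_eq (@lift_inj _ i)).
  by rewrite det_diag; apply: eq_bigr => k _; rewrite mxE.
rewrite mulr0n; case: (unliftP j i) ij => [k ->|->]; last by rewrite eqxx.
move=> _; rewrite (expand_det_row _ k) big1 ?mulr0 // => l _.
by rewrite !mxE (negbTE (neq_lift _ _)) mulr0n mul0r.
Qed.

Lemma rowmask_diag n (S : {set 'I_n}) (d : 'rV[R]_n) :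
  rowmask S (diag_mx d) = diag_mx (\row_i if i \in S then d 0 i else 1).
Proof. by apply/matrixP => i j; rewrite !mxE; case: (i \in S). Qed.

Lemma pminor_diag n (S : {set 'I_n}) (d : 'rV[R]_n) :
  pminor S (diag_mx d) = \prod_(i in S) d 0 i.
Proof.
rewrite -det_rowmask rowmask_diag det_diag [RHS]big_mkcond.
by apply: eq_bigr => i _; rewrite mxE.
Qed.
End PrincipalMinors.

Section MinorSumConj.
Variable R : comNzRingType.

Lemma det_addX_expand n (M : 'M[R]_n) :
  \det (map_mx polyC M + 'X%:M) = \sum_(S : {set 'I_n}) 'X^(n - #|S|) * (pminor S M)%:P.
Proof.
rewrite -diag_const_mx det_add_diag; apply: eq_bigr => S _.
have selC : map_mx polyC (selmx R S) = selmx _ S.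
  by apply/matrixP => i j; rewrite !mxE rmorph_nat.
have -> : pminor S (map_mx polyC M) = (pminor S M)%:P.
  by rewrite /pminor -det_map_mx !map_mxM -map_trmx selC.
congr (_ * _); rewrite (eq_bigr (fun _ => 'X)) ?prodr_const => [|i _]; last by rewrite mxE.
congr ('X^ _); apply/eqP.
by rewrite -(eqn_add2l #|S|) cardsC card_ord subnKC ?card_set_ord_le.
Qed.

Lemma minor_sum_coef n s (M : 'M[R]_n) : (s <= n)%N ->
  minor_sum s M = (\det (map_mx polyC M + 'X%:M))`_(n - s).
Proof.
move=> sn; rewrite det_addX_expand coef_sum (bigID (fun S : {set 'I_n} => #|S| == s)) /=.
rewrite [X in _ = _ + X]big1 ?addr0 => [|S /negbTE neqS].
  by apply: eq_bigr => S /eqP <-; rewrite mulrC coefCM coefXn eqxx mulr1.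
rewrite mulrC coefCM coefXn; case: eqP => [eq_sub|]; last by rewrite mulr0.
by move: neqS; rewrite -(subKn sn) eq_sub subKn ?card_set_ord_le ?eqxx.
Qed.

Lemma minor_sum_conj n s (U M : 'M[R]_n) :
  U *m U^T = 1%:M -> minor_sum s (U *m M *m U^T) = minor_sum s M.
Proof.
move=> UUT; have [sn|ns] := leqP s n; last first.
  have none (S : {set 'I_n}) : (#|S| == s) = false.
    exact/ltn_eqF/(leq_ltn_trans (card_set_ord_le S) ns).
  by rewrite /minor_sum !big_pred0.
rewrite !minor_sum_coef //; congr (_`_ _).
set Up := map_mx polyC U.
have UpUpT : Up *m Up^T = 1%:M by rewrite /Up map_trmx -map_mxM UUT map_mx1.
have -> : map_mx polyC (U *m M *m U^T) + 'X%:M = Up *m (map_mx polyC M + 'X%:M) *m Up^T.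
  rewrite !map_mxM -map_trmx mulmxDr mulmxDl; congr (_ + _).
  by rewrite mul_mx_scalar -scalemxAl UpUpT scalemx1.
by rewrite !det_mulmx mulrAC -det_mulmx UpUpT det1 mul1r.
Qed.

End MinorSumConj.

Lemma det_add_rank1_det_neq0 (R : idomainType) k
    (M : 'M[R]_k) (v : 'cV[R]_k) (w : 'rV[R]_k) :
  \det M != 0 -> \det (M + v *m w) = \det M + (w *m \adj M *m v) 0 0.
Proof.
move=> dM.
pose P := block_mx M v (-w) (1%:M : 'M_1).
have eP : P = block_mx (M + v *m w) v 0 1%:M *m block_mx 1%:M 0 (-w) 1%:M.
  rewrite mulmx_block ?mul1mx ?mul0mx ?mulmx0 ?mulmx1 ?addr0 ?add0r.
  by rewrite mulmxN addrK.
pose L := block_mx (1%:M : 'M_k) 0 (w *m \adj M) ((\det M)%:M : 'M_1).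
have eL : L *m P = block_mx M v 0 (w *m \adj M *m v + (\det M)%:M).
  rewrite mulmx_block ?mul1mx ?mul0mx ?addr0 ?mulmx1.
  by rewrite -mulmxA mul_adj_mx mul_mx_scalar mul_scalar_mx scalerN addrN.
have := congr1 determinant eL.
rewrite det_mulmx det_lblock det_ublock det1 mul1r det_scalar1.
rewrite eP det_mulmx det_ublock det_lblock !det1 !mulr1 det_mx11 !mxE eqxx mulr1n.
by move/(mulfI dM) => ->; rewrite addrC.
Qed.

(* Over R[X] the matrix M + X has a monic, hence nonzero, determinant;
   evaluate at X = 0. *)
Lemma det_add_rank1 (R : idomainType) k (M : 'M[R]_k) (v : 'cV[R]_k) (w : 'rV[R]_k) :
  \det (M + v *m w) = \det M + (w *m \adj M *m v) 0 0.
Proof.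
pose MX : 'M[{poly R}]_k := map_mx polyC M + 'X%:M.
have dMX : \det MX != 0.
  by rewrite /MX -[M]opprK map_mxN addrC monic_neq0 // char_poly_monic.
have := det_add_rank1_det_neq0 (map_mx polyC v) (map_mx polyC w) dMX.
move/(congr1 (horner_eval 0)).
have evMX : map_mx (horner_eval 0) MX = M.
  apply/matrixP => i j; rewrite !mxE /horner_eval hornerD hornerC hornerMn hornerX.
  by rewrite mul0rn addr0.
have evC p q (N : 'M[R]_(p, q)) : map_mx (horner_eval 0) (map_mx polyC N) = N.
  by apply/matrixP => i j; rewrite !mxE /horner_eval hornerC.
have ev11 (X : 'M[{poly R}]_1) : horner_eval 0 (X 0 0) = (map_mx (horner_eval 0) X) 0 0.
  by rewrite mxE.
rewrite rmorphD /= -!det_map_mx map_mxD map_mxM evMX !evC ev11.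
by rewrite !map_mxM map_mx_adj evMX !evC.
Qed.

Section GramDeterminant.
Variable R : realFieldType.

Lemma rV_gram_eq0 p (c : 'rV[R]_p) : (c *m c^T) 0 0 = 0 -> c = 0.
Proof.
rewrite mxE => /eqP; rewrite psumr_eq0 => [/allP c0|j _]; last first.
  by rewrite [c^T _ _]mxE -expr2 sqr_ge0.
apply/rowP => j; have /c0 := mem_index_enum j.
by rewrite [c^T _ _]mxE -expr2 sqrf_eq0 mxE => /eqP.
Qed.

(* Schur complement of the pivot [a = c c^T]: [P] projects orthogonally to [c]. *)
Lemma det_gram_col_mx p k (c : 'rV[R]_p) (C : 'M[R]_(k, p)) :
  let a := (c *m c^T) 0 0 in let P := 1%:M - a^-1 *: (c^T *m c) in
  a != 0 ->
  \det (col_mx c C *m (col_mx c C)^T) = a * \det (C *m P *m (C *m P)^T).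
Proof.
move=> a P a0.
have cc : c *m c^T = a%:M by rewrite {1}[c *m c^T]mx11_scalar.
have PT : P^T = P by rewrite /P linearB linearZ /= trmx1 trmx_mul trmxK.
have PP : P *m P = P.
  rewrite {1}/P mulmxBl mul1mx -scalemxAl {1}/P mulmxBr mulmx1 -scalemxAr.
  rewrite mulmxA -(mulmxA c^T) cc mul_mx_scalar -scalemxAl scalerA mulVf //.
  by rewrite scale1r subrr scaler0 subr0.
have eB : block_mx (c *m c^T) (c *m C^T) (C *m c^T) (C *m C^T) =
  block_mx 1%:M 0 (a^-1 *: (C *m c^T)) 1%:M *m
  block_mx (c *m c^T) (c *m C^T) 0 (C *m P *m (C *m P)^T).
  rewrite mulmx_block ?mul1mx ?mul0mx ?addr0 ?mulmx0 ?add0r ?mul1mx.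
  congr block_mx; first by rewrite cc mul_mx_scalar scalerA mulfV // scale1r.
  rewrite trmx_mul PT (mulmxA (C *m P)) -(mulmxA C P P) PP /P mulmxBr mulmx1 mulmxBl.
  by rewrite -scalemxAr -!scalemxAl !mulmxA addrC subrK.
rewrite tr_col_mx mul_col_row eB det_mulmx det_lblock det_ublock !det1 !mul1r cc.
by rewrite det_scalar1.
Qed.

Lemma gram_det_ge0 k p (C : 'M[R]_(k, p)) : 0 <= \det (C *m C^T).
Proof.
elim: k C => [|k IH] C; first by rewrite det_mx00.
pose C1 : 'M_(1 + k, p) := C; change (0 <= \det (C1 *m C1^T)).
rewrite -(vsubmxK C1); set c := usubmx C1; set C' := dsubmx C1.
have [a0|an0] := eqVneq ((c *m c^T) 0 0) 0.
  rewrite (rV_gram_eq0 a0) tr_col_mx mul_col_row !mul0mx trmx0 mulmx0 det_ublock.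
  by rewrite det_mx11 mxE mul0r.
rewrite det_gram_col_mx // mulr_ge0 // mxE sumr_ge0 // => j _.
by rewrite [c^T _ _]mxE -expr2 sqr_ge0.
Qed.

End GramDeterminant.

Section QuadraticForms.
Variable R : comNzRingType.

Definition qf n (M : 'M[R]_n) (x : 'cV[R]_n) : R := (x^T *m M *m x) 0 0.

Lemma qfB n (M N : 'M[R]_n) x : qf (M - N) x = qf M x - qf N x.
Proof. by rewrite /qf mulmxBr mulmxBl !mxE. Qed.

Lemma qfZ n c (M : 'M[R]_n) x : qf (c *: M) x = c * qf M x.
Proof. by rewrite /qf -scalemxAr -scalemxAl mxE. Qed.

Lemma qf_sum n (I : finType) (P : pred I) (F : I -> 'M[R]_n) x :
  qf (\sum_(i | P i) F i) x = \sum_(i | P i) qf (F i) x.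
Proof. by rewrite /qf mulmx_sumr mulmx_suml summxE. Qed.

Lemma qf_trmx_mul k n (B : 'M[R]_(k, n)) (M : 'M[R]_k) x :
  qf (B^T *m M *m B) x = qf M (B *m x).
Proof. by rewrite /qf trmx_mul !mulmxA. Qed.

Lemma qf_diag n (d : 'rV[R]_n) x : qf (diag_mx d) x = \sum_i d 0 i * x i 0 ^+ 2.
Proof.
rewrite /qf mul_mx_diag mxE; apply: eq_bigr => i _.
by rewrite !mxE expr2 mulrA [x i 0 * _]mulrC.
Qed.

End QuadraticForms.

Section Conjugation.
Variable R : comNzRingType.

Lemma svd_gram m n (U : 'M[R]_m) (Sig : 'M[R]_(m, n)) (V : 'M[R]_n) :
  V^T *m V = 1%:M ->
  U *m Sig *m V^T *m (U *m Sig *m V^T)^T = U *m (Sig *m Sig^T) *m U^T.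
Proof.
by move=> VTV; rewrite !trmx_mul trmxK !mulmxA -(mulmxA (U *m Sig)) VTV mulmx1.
Qed.

Lemma rdiag_gram m n (Sig : 'M[R]_(m, n)) :
  (forall i j, val i != val j -> Sig i j = 0) ->
  Sig *m Sig^T = diag_mx (\row_i (Sig *m Sig^T) i i).
Proof.
move=> Sig_diag; apply/matrixP => i k; rewrite [RHS]mxE [(\row__ _) 0 i]mxE.
have [<-|ik] := eqVneq i k; first by rewrite mulr1n.
rewrite mulr0n mxE big1 // => j _; rewrite mxE.
have [ij|nij] := eqVneq (val i) (val j); last by rewrite (Sig_diag i j) ?mul0r.
rewrite (Sig_diag k j) ?mulr0 //; apply: contra ik => /eqP kj.
by apply/eqP/val_inj; rewrite /= ij kj.
Qed.

Lemma conj_add_rank1 m (U D : 'M[R]_m) (x : 'cV[R]_m) : U *m U^T = 1%:M ->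
  U *m D *m U^T + x *m x^T = U *m (D + U^T *m x *m (U^T *m x)^T) *m U^T.
Proof.
move=> UUT; rewrite mulmxDr mulmxDl trmx_mul trmxK !mulmxA UUT mul1mx.
by rewrite -(mulmxA (x *m x^T)) UUT mulmx1.
Qed.

End Conjugation.

Section VolumeSampling.
Variable R : realType.

Lemma idsub_selmx m (S : {set 'I_m}) : idsub R S = selmx R S.
Proof. by apply/matrixP => i j; rewrite !mxE. Qed.

Lemma rowsubset_selmx m n (A : 'M[R]_(m, n)) (S : {set 'I_m}) :
  rowsubset A S = selmx R S *m A.
Proof. by rewrite /selmx -rowsubE; apply/matrixP => i j; rewrite !mxE. Qed.

Lemma pinv_gram_inv k p (C : 'M[R]_(k, p)) :
  C *m C^T \in unitmx -> (pinv C)^T *m pinv C = invmx (C *m C^T).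
Proof.
set G := C *m C^T => unitG.
have GT : G^T = G by rewrite /G trmx_mul trmxK.
have [X1 X2 _ X4] : penrose C (pinv C).
  apply: (xgetPex 0 (P := [set X | penrose C X])).
  exists (C^T *m invmx G).
  have CX : C *m (C^T *m invmx G) = 1%:M by rewrite mulmxA mulmxV.
  split; first by rewrite CX mul1mx.
  - by rewrite -mulmxA CX mulmx1.
  - by rewrite CX trmx1.
  - by rewrite !trmx_mul trmxK trmx_inv GT mulmxA.
set X := pinv C in X1 X2 X4 *.
have CX : C *m X = 1%:M.
  by rewrite -[C *m X]mulmx1 -(mulmxV unitG) mulmxA {1}/G (mulmxA _ C) X1.
have GXX : G *m (X^T *m X) = 1%:M.
  by rewrite /G -mulmxA (mulmxA C^T) -trmx_mul X4 X2 CX.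
by rewrite -[LHS]mul1mx -(mulVmx unitG) -mulmxA GXX mulmx1.
Qed.

Lemma gram_det_pinv_qf_le k p (C : 'M[R]_(k, p)) (v : 'cV[R]_k) :
  \det (C *m C^T) * qf ((pinv C)^T *m pinv C) v <=
  \det (C *m C^T + v *m v^T) - \det (C *m C^T).
Proof.
have [d0|dn0] := eqVneq (\det (C *m C^T)) 0.
  rewrite d0 mul0r subr0.
  by rewrite -[_ + _]mul_row_col -tr_row_mx gram_det_ge0.
rewrite det_add_rank1 addrAC subrr add0r.
have unitG : C *m C^T \in unitmx by rewrite unitmxE unitfE.
by rewrite pinv_gram_inv // /invmx unitG qfZ mulrA mulfV ?mul1r.
Qed.

Lemma det_gram_rowsubset m n (A : 'M[R]_(m, n)) (T : {set 'I_m}) :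
  \det (rowsubset A T *m (rowsubset A T)^T) = pminor T (A *m A^T).
Proof. by rewrite rowsubset_selmx /pminor trmx_mul !mulmxA. Qed.

Lemma minor_sum_gram_ge0 m n (A : 'M[R]_(m, n)) s : 0 <= minor_sum s (A *m A^T).
Proof. by rewrite sumr_ge0 // => T _; rewrite -det_gram_rowsubset gram_det_ge0. Qed.

Lemma qf_vol_expect m n (A : 'M[R]_(m, n)) s (f : {set 'I_m} -> 'M[R]_m) x :
  qf (vol_expect A s f) x =
  (minor_sum s (A *m A^T))^-1 *
    \sum_(T : {set 'I_m} | #|T| == s) pminor T (A *m A^T) * qf (f T) x.
Proof.
rewrite qf_sum mulr_sumr; apply: eq_bigr => T _.
rewrite qfZ /volP /minor_sum det_gram_rowsubset.
under eq_bigr do rewrite det_gram_rowsubset.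
by rewrite mulrAC mulrC.
Qed.

Lemma trmx_vol_expect m n (A : 'M[R]_(m, n)) s (f : {set 'I_m} -> 'M[R]_m) :
  (forall T, (f T)^T = f T) -> (vol_expect A s f)^T = vol_expect A s f.
Proof. by move=> fT; rewrite linear_sum; apply: eq_bigr => T _; rewrite linearZ /= fT. Qed.

Lemma loewner_le_qf m (M N : 'M[R]_m) :
  M^T = M -> N^T = N -> (forall x, qf M x <= qf N x) -> loewner_le M N.
Proof.
move=> MT NT MN; split; first by rewrite linearB /= MT NT.
by move=> x; rewrite -/(qf _ x) qfB subr_ge0.
Qed.

Lemma sum_pminor_pinv_qf_le m n (A : 'M[R]_(m, n)) (x : 'cV[R]_m) s :
  \sum_(T : {set 'I_m} | #|T| == s) pminor T (A *m A^T) *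
    qf ((idsub R T)^T *m (pinv (rowsubset A T))^T *m pinv (rowsubset A T) *m idsub R T) x
  <= minor_sum s (A *m A^T + x *m x^T) - minor_sum s (A *m A^T).
Proof.
rewrite /minor_sum -sumrB; apply: ler_sum => T _.
rewrite -(mulmxA (idsub R T)^T) idsub_selmx qf_trmx_mul -det_gram_rowsubset.
have -> : pminor T (A *m A^T + x *m x^T) = \det (rowsubset A T *m (rowsubset A T)^T +
    selmx R T *m x *m (selmx R T *m x)^T).
  by rewrite /pminor rowsubset_selmx !trmx_mul mulmxDr mulmxDl !mulmxA.
exact: gram_det_pinv_qf_le.
Qed.

Lemma elem_sym_remove m s (lam : 'I_m -> R) (i : 'I_m) : (1 <= s)%N ->
  \sum_(S : {set 'I_m} | (#|S| == s) && (i \in S)) \prod_(j in S :\ i) lam j =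
  elem_sym s.-1 (remove_entry lam i).
Proof.
move=> s_ge1.
have i_notin (T : {set 'I_m.-1}) : i \notin lift i @: T.
  by apply/imsetP => -[k _ /eqP]; rewrite eq_sym lift_eqF.
have liftK (T : {set 'I_m.-1}) : [set k | lift i k \in i |: (lift i @: T)] = T.
  by apply/setP => k; rewrite !inE lift_eqF /= mem_imset //; apply: lift_inj.
rewrite /elem_sym (reindex_onto (fun T : {set 'I_m.-1} => i |: (lift i @: T))
   (fun S => [set k | lift i k \in S])) /=; last first.
  move=> S /andP[_ iS]; apply/setP => x; rewrite !inE.
  case: (unliftP i x) => [k ->|->]; last by rewrite eqxx iS.
  by rewrite lift_eqF /= mem_imset ?inE //; apply: lift_inj.
apply: eq_big => [T|T _].
  rewrite liftK eqxx andbT in_setU1 eqxx andbT cardsU1 i_notin card_imset;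
    last exact: lift_inj.
  by case: s s_ge1 => [|s'] //= _; rewrite add1n eqSS.
by rewrite setU1K // big_imset //= => a b _ _; apply: lift_inj.
Qed.

Lemma minor_sum_diag m s (lam : 'I_m -> R) :
  minor_sum s (diag_mx (\row_i lam i)) = elem_sym s lam.
Proof.
apply: eq_bigr => S _; rewrite pminor_diag.
by apply: eq_bigr => i _; rewrite mxE.
Qed.

Lemma pminor_diag_add_rank1 m (S : {set 'I_m}) (lam : 'I_m -> R) (y : 'cV[R]_m) :
  pminor S (diag_mx (\row_i lam i) + y *m y^T) - pminor S (diag_mx (\row_i lam i)) =
  \sum_(i in S) (\prod_(j in S :\ i) lam j) * y i 0 ^+ 2.
Proof.
set v := \col_i (if i \in S then y i 0 else 0).
have maskE : rowmask S (diag_mx (\row_i lam i) + y *m y^T) =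
    rowmask S (diag_mx (\row_i lam i)) + v *m y^T.
  apply/matrixP => i j; rewrite !mxE !big_ord1 !mxE.
  by case: (i \in S); rewrite ?mul0r ?addr0.
rewrite -!det_rowmask maskE det_add_rank1 addrAC subrr add0r rowmask_diag adj_diag.
rewrite mul_mx_diag mxE [RHS]big_mkcond; apply: eq_bigr => i _; rewrite !mxE.
case iS: (i \in S); last by rewrite mulr0.
have -> : \prod_(j | j != i) (\row_k (if k \in S then (\row_l lam l) 0 k else 1)) 0 j =
          \prod_(j in S :\ i) lam j.
  rewrite [RHS]big_mkcond [LHS]big_mkcond; apply: eq_bigr => j _.
  by rewrite !inE !mxE; case: (j == i); case: (j \in S).
by rewrite expr2 -mulrA mulrCA.
Qed.

(* [s.-1] is truncated: for [s = 0] the right-hand side would not vanish. *)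
Lemma minor_sum_diag_add_rank1 m s (lam : 'I_m -> R) (y : 'cV[R]_m) : (1 <= s)%N ->
  minor_sum s (diag_mx (\row_i lam i) + y *m y^T) - minor_sum s (diag_mx (\row_i lam i)) =
  \sum_i elem_sym s.-1 (remove_entry lam i) * y i 0 ^+ 2.
Proof.
move=> s_ge1; rewrite /minor_sum -sumrB.
under eq_bigr do rewrite pminor_diag_add_rank1 big_mkcond /=.
rewrite exchange_big /=; apply: eq_bigr => i _.
by rewrite -elem_sym_remove // mulr_suml big_mkcondr.
Qed.

End VolumeSampling.

Unset Implicit Arguments.

Theorem lemma2p2 (R : realType) (m n : nat) (A : 'M[R]_(m, n))
  (U : 'M[R]_m) (Sig : 'M[R]_(m, n)) (V : 'M[R]_n)
  (hU : U^T *m U = 1%:M /\ U *m U^T = 1%:M)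
  (hV : V^T *m V = 1%:M /\ V *m V^T = 1%:M)
  (hSdiag : forall (i : 'I_m) (j : 'I_n), val i != val j -> Sig i j = 0)
  (hSnn : forall (i : 'I_m) (j : 'I_n), val i = val j -> 0 <= Sig i j)
  (hSdec : forall (i1 i2 : 'I_m) (j1 j2 : 'I_n), val i1 = val j1 -> val i2 = val j2 ->
             (val i1 <= val i2)%N -> Sig i2 j2 <= Sig i1 j1)
  (hA : A = U *m Sig *m V^T)
  (s : nat) (hs1 : (1 <= s)%N) (hsr : (s <= \rank A)%N) :
  let lam : 'I_m -> R := fun i => (Sig *m Sig^T) i i in
  let Hs : 'M[R]_m :=
    (elem_sym s lam)^-1 *:
      (U *m diag_mx (\row_(i < m) elem_sym s.-1 (remove_entry lam i)) *m U^T) in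
  loewner_le
    (vol_expect A s (fun S =>
       (idsub R S)^T *m (pinv (rowsubset A S))^T *m pinv (rowsubset A S) *m idsub R S))
    Hs.
Proof.
(* Only the diagonal shape of [Sig] matters; for [s > rank A] both sides are 0
   (as [e_s(lam) = 0] and [0^-1 = 0]). *)
move=> lam Hs.
have gramA : A *m A^T = U *m diag_mx (\row_i lam i) *m U^T.
  by rewrite hA svd_gram ?hV.1 // {1}(rdiag_gram hSdiag).
apply: loewner_le_qf => [||x].
- by apply: trmx_vol_expect => T; rewrite !trmx_mul !trmxK !mulmxA.
- by rewrite /Hs linearZ /= !trmx_mul trmxK tr_diag_mx !mulmxA.
rewrite qf_vol_expect.
apply: le_trans (ler_wpM2l _ (sum_pminor_pinv_qf_le A x s)) _.
  by rewrite invr_ge0 minor_sum_gram_ge0.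
rewrite gramA conj_add_rank1 ?hU.2 // !minor_sum_conj ?hU.2 //.
rewrite minor_sum_diag_add_rank1 // minor_sum_diag /Hs qfZ -[U in qf (U *m _ *m _)]trmxK.
rewrite qf_trmx_mul qf_diag.
by under [X in _ <= _ * X]eq_bigr do rewrite mxE.
Qed.
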